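(* Let $c_1>0>c_2$, $L=c_1-c_2$, $t_0>0$, let $u,q_1,q_2$ be as in the context, and for $\xi\in\mathbb R$ set $$C(\xi)=c_2-c_1e^{-Lt_0}+Le^{\xi+c_2t_0},\qquad D(\xi)=L^2e^{-c_1t_0}-Lc_1e^{\xi}+Lc_2e^{\xi-Lt_0}.$$ Then for every $\xi\in[q_1(0),q_2(0)]$ and every $t\in[0,t_0)$ both quantities $$D(\xi)+\big(c_1e^{c_2(t-t_0)}-c_2e^{c_1(t-t_0)}\big)C(\xi)\quad\text{and}\quad \big(c_1e^{L(t-t_0)}-c_2\big)D(\xi)+L^2e^{c_1(t-t_0)}C(\xi)$$ are strictly negative, so that $$y_m(t,\xi)=\ln\!\left(\frac{e^{c_2(t-t_0)}}{L}\cdot\frac{\big(c_1e^{L(t-t_0)}-c_2\big)D(\xi)+L^2e^{c_1(t-t_0)}C(\xi)}{D(\xi)+\big(c_1e^{c_2(t-t_0)}-c_2e^{c_1(t-t_0)}\big)C(\xi)}\right)$$ is well defined. Moreover, for each such $\xi$, $y_m(0,\xi)=\xi$, $q_1(t)\le y_m(t,\xi)\le q_2(t)$, and $t\mapsto y_m(t,\xi)$ solves the characteristic equation $$\partial_t y_m(t,\xi)=u\big(t,y_m(t,\xi)\big),\qquad 0\le t<t_0,$$ and $y_m(t,\xi)\to 0$ as $t\uparrow t_0$.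
   Context: For $t\neq t_0$ define $$p_1(t)=\frac{c_1-c_2e^{L(t-t_0)}}{1-e^{L(t-t_0)}},\qquad p_2(t)=\frac{c_2-c_1e^{L(t-t_0)}}{1-e^{L(t-t_0)}},$$ and for all $t$ define $$q_1(t)=\ln L+c_1(t-t_0)-\ln\big(c_1-c_2e^{L(t-t_0)}\big),\qquad q_2(t)=-\ln L+c_2(t-t_0)+\ln\big(c_1e^{L(t-t_0)}-c_2\big).$$ Set $u(t,x)=p_1(t)e^{-|x-q_1(t)|}+p_2(t)e^{-|x-q_2(t)|}$ for $x\in\mathbb R$, $t<t_0$. *)

From Stdlib Require Import Reals Lra.
Open Scope R_scope.

Definition Lc (c1 c2 : R) : R := c1 - c2.

Definition p1 (c1 c2 t0 t : R) : R :=
  (c1 - c2 * exp (Lc c1 c2 * (t - t0))) / (1 - exp (Lc c1 c2 * (t - t0))).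
Definition p2 (c1 c2 t0 t : R) : R :=
  (c2 - c1 * exp (Lc c1 c2 * (t - t0))) / (1 - exp (Lc c1 c2 * (t - t0))).
Definition q1 (c1 c2 t0 t : R) : R :=
  ln (Lc c1 c2) + c1 * (t - t0) - ln (c1 - c2 * exp (Lc c1 c2 * (t - t0))).
Definition q2 (c1 c2 t0 t : R) : R :=
  - ln (Lc c1 c2) + c2 * (t - t0) + ln (c1 * exp (Lc c1 c2 * (t - t0)) - c2).

Definition u (c1 c2 t0 t x : R) : R :=
  p1 c1 c2 t0 t * exp (- Rabs (x - q1 c1 c2 t0 t))
  + p2 c1 c2 t0 t * exp (- Rabs (x - q2 c1 c2 t0 t)).

Definition Cxi (c1 c2 t0 xi : R) : R :=
  c2 - c1 * exp (- Lc c1 c2 * t0) + Lc c1 c2 * exp (xi + c2 * t0).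
Definition Dxi (c1 c2 t0 xi : R) : R :=
  Lc c1 c2 ^ 2 * exp (- c1 * t0) - Lc c1 c2 * c1 * exp xi
  + Lc c1 c2 * c2 * exp (xi - Lc c1 c2 * t0).

Definition ymden (c1 c2 t0 t xi : R) : R :=
  Dxi c1 c2 t0 xi
  + (c1 * exp (c2 * (t - t0)) - c2 * exp (c1 * (t - t0))) * Cxi c1 c2 t0 xi.
Definition ymnum (c1 c2 t0 t xi : R) : R :=
  (c1 * exp (Lc c1 c2 * (t - t0)) - c2) * Dxi c1 c2 t0 xi
  + Lc c1 c2 ^ 2 * exp (c1 * (t - t0)) * Cxi c1 c2 t0 xi.

Definition ym (c1 c2 t0 t xi : R) : R :=
  ln (exp (c2 * (t - t0)) / Lc c1 c2 * (ymnum c1 c2 t0 t xi / ymden c1 c2 t0 t xi)).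

(* Write a = -D(xi) and b(t) = -(c1 e^{c2(t-t0)} - c2 e^{c1(t-t0)}) C(xi).  Then a is a positive
   multiple of e^xi - e^{q1(0)} and b(t) a positive multiple of e^{q2(0)} - e^xi, so for
   q1(0) <= xi <= q2(0) both weights are nonnegative and, as q1(0) < q2(0), not both zero.  The
   argument of the logarithm defining y_m is the weighted mean (a e^{q2(t)} + b(t) e^{q1(t)}) /
   (a + b(t)).  This gives the signs of numerator and denominator, y_m(0,xi) = xi and
   q1 <= y_m <= q2; since q1(t0) = q2(t0) = 0, the squeeze forces y_m(t0,xi) = 0, and the limit is
   continuity at t0.  The characteristic equation is then a direct computation, once
   q1 <= y_m <= q2 has resolved the absolute values in u. *)

From Stdlib Require Import Reals Lra Psatz.
From Coquelicot Require Import Coquelicot.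
Open Scope R_scope.

Lemma wmean_between (a b x y : R) : 0 <= a -> 0 <= b -> 0 < a + b -> x <= y ->
  x <= (a * y + b * x) / (a + b) <= y.
Proof.
  intros ha hb hab hxy.
  assert (Hx : (a * y + b * x) / (a + b) - x = a * (y - x) / (a + b)) by (field; lra).
  assert (Hy : y - (a * y + b * x) / (a + b) = b * (y - x) / (a + b)) by (field; lra).
  assert (0 <= a * (y - x) / (a + b)) by (apply Rdiv_le_0_compat; nra).
  assert (0 <= b * (y - x) / (a + b)) by (apply Rdiv_le_0_compat; nra).
  lra.
Qed.

Lemma exp_le_exp x y : x <= y -> exp x <= exp y.
Proof. intros [h|h]; [left; apply exp_increasing, h | right; rewrite h; reflexivity]. Qed.

Lemma limit1_in_continuity_pt (f : R -> R) (D : R -> Prop) (x l : R) :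
  continuity_pt f x -> f x = l -> limit1_in f D l x.
Proof.
  intros Hc <- eps heps.
  destruct (Hc eps heps) as [alp [halp H]].
  exists alp; split; [exact halp|].
  intros y [_ hy]. destruct (Req_dec y x) as [->|hyx].
  - rewrite R_dist_eq. exact heps.
  - apply H. split; [split; [exact I | congruence] | exact hy].
Qed.

Section Characteristic.

Variables c1 c2 t0 : R.
Hypothesis hc1 : 0 < c1.
Hypothesis hc2 : c2 < 0.

Local Notation L := (Lc c1 c2).
Local Notation E t := (exp (Lc c1 c2 * (t - t0))).

Lemma Lc_pos : 0 < L.
Proof. unfold Lc; lra. Qed.

Lemma c1_sub_c2E_pos t : 0 < c1 - c2 * E t.
Proof. pose proof (exp_pos (L * (t - t0))). nra. Qed.

Lemma c1E_sub_c2_pos t : 0 < c1 * E t - c2.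
Proof. pose proof (exp_pos (L * (t - t0))). nra. Qed.

Lemma exp_c1_split t : exp (c1 * (t - t0)) = E t * exp (c2 * (t - t0)).
Proof. rewrite <- exp_plus. f_equal. unfold Lc; ring. Qed.

Lemma exp_q1 t : exp (q1 c1 c2 t0 t) = L * exp (c1 * (t - t0)) / (c1 - c2 * E t).
Proof.
  unfold q1, Rminus at 1. rewrite !exp_plus, exp_Ropp, !exp_ln;
    [reflexivity | apply c1_sub_c2E_pos | apply Lc_pos].
Qed.

Lemma exp_q2 t : exp (q2 c1 c2 t0 t) = exp (c2 * (t - t0)) * (c1 * E t - c2) / L.
Proof.
  unfold q2. rewrite !exp_plus, exp_Ropp, !exp_ln; [| apply c1E_sub_c2_pos | apply Lc_pos].
  field. apply Rgt_not_eq, Lc_pos.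
Qed.

Lemma exp_q2_sub_exp_q1 t :
  exp (q2 c1 c2 t0 t) - exp (q1 c1 c2 t0 t)
  = - (c1 * c2) * exp (c2 * (t - t0)) * (1 - E t) ^ 2 / (L * (c1 - c2 * E t)).
Proof.
  rewrite exp_q1, exp_q2, exp_c1_split.
  pose proof (c1_sub_c2E_pos t). pose proof Lc_pos.
  set (e := E t) in *. unfold Lc in *. field. split; lra.
Qed.

Lemma exp_q1_le_exp_q2 t : exp (q1 c1 c2 t0 t) <= exp (q2 c1 c2 t0 t).
Proof.
  cut (0 <= exp (q2 c1 c2 t0 t) - exp (q1 c1 c2 t0 t)); [lra|].
  rewrite exp_q2_sub_exp_q1.
  pose proof (exp_pos (c2 * (t - t0))). pose proof (c1_sub_c2E_pos t). pose proof Lc_pos.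
  assert (0 < - (c1 * c2)) by nra.
  apply Rdiv_le_0_compat; [apply Rmult_le_pos; [nra | apply pow2_ge_0] | nra].
Qed.

Lemma exp_q1_lt_exp_q2 t : t <> t0 -> exp (q1 c1 c2 t0 t) < exp (q2 c1 c2 t0 t).
Proof.
  intro ht. cut (0 < exp (q2 c1 c2 t0 t) - exp (q1 c1 c2 t0 t)); [lra|].
  assert (hE : 0 < (1 - E t) ^ 2).
  { replace ((1 - E t) ^ 2) with (Rsqr (1 - E t)) by (unfold Rsqr; ring).
    apply Rlt_0_sqr. intro h. apply ht.
    assert (h0 : exp (L * (t - t0)) = exp 0) by (rewrite exp_0; lra).
    apply exp_inv in h0. pose proof Lc_pos. nra. }
  rewrite exp_q2_sub_exp_q1.
  pose proof (exp_pos (c2 * (t - t0))). pose proof (c1_sub_c2E_pos t). pose proof Lc_pos.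
  assert (0 < - (c1 * c2)) by nra.
  apply Rdiv_lt_0_compat; [apply Rmult_lt_0_compat; [nra | exact hE] | nra].
Qed.

Lemma q1_at_t0 : q1 c1 c2 t0 t0 = 0.
Proof. unfold q1. rewrite Rminus_diag, !Rmult_0_r, exp_0, Rmult_1_r. unfold Lc. ring. Qed.

Lemma q2_at_t0 : q2 c1 c2 t0 t0 = 0.
Proof. unfold q2. rewrite Rminus_diag, !Rmult_0_r, exp_0, Rmult_1_r. unfold Lc. ring. Qed.

Lemma u_between t y : q1 c1 c2 t0 t <= y <= q2 c1 c2 t0 t ->
  u c1 c2 t0 t y = p1 c1 c2 t0 t * (exp (q1 c1 c2 t0 t) / exp y)
                   + p2 c1 c2 t0 t * (exp y / exp (q2 c1 c2 t0 t)).
Proof.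
  intros [h1 h2]. unfold u.
  rewrite Rabs_pos_eq, Rabs_left1 by lra.
  unfold Rdiv. rewrite <- !exp_Ropp, <- !exp_plus. do 3 f_equal; ring.
Qed.

Variable xi : R.

Local Notation C := (Cxi c1 c2 t0 xi).
Local Notation D := (Dxi c1 c2 t0 xi).
Local Notation P t := (c1 * exp (c2 * (t - t0)) - c2 * exp (c1 * (t - t0))).

Lemma P_eq t : P t = exp (c2 * (t - t0)) * (c1 - c2 * E t).
Proof. rewrite exp_c1_split. ring. Qed.

Lemma P_pos t : 0 < P t.
Proof. rewrite P_eq. apply Rmult_lt_0_compat; [apply exp_pos | apply c1_sub_c2E_pos]. Qed.

Lemma Dxi_eq : D = L * (c1 - c2 * E 0) * (exp (q1 c1 c2 t0 0) - exp xi).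
Proof.
  rewrite exp_q1, exp_c1_split. unfold Dxi.
  replace (- c1 * t0) with (L * (0 - t0) + c2 * (0 - t0)) by (unfold Lc; ring).
  replace (xi - L * t0) with (xi + L * (0 - t0)) by ring.
  rewrite !exp_plus. field. apply Rgt_not_eq, c1_sub_c2E_pos.
Qed.

Lemma Cxi_eq : C = L * exp (c2 * t0) * (exp xi - exp (q2 c1 c2 t0 0)).
Proof.
  rewrite exp_q2. unfold Cxi.
  replace (- L * t0) with (L * (0 - t0)) by ring.
  replace (exp (c2 * (0 - t0))) with (/ exp (c2 * t0)) by (rewrite <- exp_Ropp; f_equal; ring).
  rewrite exp_plus. field.
  split; apply Rgt_not_eq; [apply exp_pos | apply Lc_pos].
Qed.

Definition weight_q2 : R := - D.
Definition weight_q1 (t : R) : R := - (P t * C).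
Definition ym_mean (t : R) : R :=
  (weight_q2 * exp (q2 c1 c2 t0 t) + weight_q1 t * exp (q1 c1 c2 t0 t))
  / (weight_q2 + weight_q1 t).

Lemma ymden_eq t : ymden c1 c2 t0 t xi = - (weight_q2 + weight_q1 t).
Proof. unfold ymden, weight_q1, weight_q2. ring. Qed.

Lemma ymnum_eq t : weight_q2 + weight_q1 t <> 0 ->
  exp (c2 * (t - t0)) / L * ymnum c1 c2 t0 t xi = - (weight_q2 + weight_q1 t) * ym_mean t.
Proof.
  intro hS. unfold ym_mean, ymnum, weight_q1, weight_q2 in *.
  rewrite exp_q1, exp_q2, P_eq, exp_c1_split in *.
  pose proof (c1_sub_c2E_pos t). pose proof Lc_pos.
  field. repeat split; lra.
Qed.

Lemma ym_eq t : weight_q2 + weight_q1 t <> 0 -> ym c1 c2 t0 t xi = ln (ym_mean t).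
Proof.
  intro hS. unfold ym. f_equal.
  pose proof (exp_pos (c2 * (t - t0))). pose proof Lc_pos.
  replace (exp (c2 * (t - t0)) / L * (ymnum c1 c2 t0 t xi / ymden c1 c2 t0 t xi))
    with (exp (c2 * (t - t0)) / L * ymnum c1 c2 t0 t xi / ymden c1 c2 t0 t xi)
    by (field; rewrite ymden_eq; lra).
  rewrite ymnum_eq, ymden_eq by exact hS. field. exact hS.
Qed.

Lemma weight_q2_eq : weight_q2 = L * (c1 - c2 * E 0) * (exp xi - exp (q1 c1 c2 t0 0)).
Proof. unfold weight_q2. rewrite Dxi_eq. ring. Qed.

Lemma weight_q1_eq t :
  weight_q1 t = P t * (L * exp (c2 * t0)) * (exp (q2 c1 c2 t0 0) - exp xi).
Proof. unfold weight_q1. rewrite Cxi_eq. ring. Qed.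

Hypothesis ht0 : 0 < t0.
Hypothesis hxi : q1 c1 c2 t0 0 <= xi <= q2 c1 c2 t0 0.

Lemma weight_q2_nonneg : 0 <= weight_q2.
Proof.
  rewrite weight_q2_eq. pose proof (c1_sub_c2E_pos 0). pose proof Lc_pos.
  pose proof (exp_le_exp _ _ (proj1 hxi)).
  apply Rmult_le_pos; [apply Rmult_le_pos|]; lra.
Qed.

Lemma weight_q1_nonneg t : 0 <= weight_q1 t.
Proof.
  rewrite weight_q1_eq. pose proof (c1_sub_c2E_pos 0). pose proof Lc_pos. pose proof (P_pos t).
  pose proof (exp_pos (c2 * t0)). pose proof (exp_le_exp _ _ (proj2 hxi)).
  apply Rmult_le_pos; [apply Rmult_le_pos|]; nra.
Qed.

Lemma weight_sum_pos t : 0 < weight_q2 + weight_q1 t.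
Proof.
  pose proof (exp_q1_lt_exp_q2 0 ltac:(lra)) as hq.
  pose proof weight_q2_nonneg. pose proof (weight_q1_nonneg t).
  destruct (Rle_lt_dec (exp xi) (exp (q1 c1 c2 t0 0))) as [hle|hlt].
  - cut (0 < weight_q1 t); [lra|].
    rewrite weight_q1_eq. pose proof (c1_sub_c2E_pos 0). pose proof Lc_pos. pose proof (P_pos t).
    pose proof (exp_pos (c2 * t0)).
    apply Rmult_lt_0_compat; [apply Rmult_lt_0_compat|]; nra.
  - cut (0 < weight_q2); [lra|].
    rewrite weight_q2_eq. pose proof (c1_sub_c2E_pos 0). pose proof Lc_pos.
    apply Rmult_lt_0_compat; [apply Rmult_lt_0_compat|]; lra.
Qed.

Lemma ym_mean_between t :
  exp (q1 c1 c2 t0 t) <= ym_mean t <= exp (q2 c1 c2 t0 t).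
Proof.
  apply wmean_between; [apply weight_q2_nonneg | apply weight_q1_nonneg |
                        apply weight_sum_pos | apply exp_q1_le_exp_q2].
Qed.

Lemma ymden_neg t : ymden c1 c2 t0 t xi < 0.
Proof. rewrite ymden_eq. pose proof (weight_sum_pos t). lra. Qed.

Lemma ymnum_neg t : ymnum c1 c2 t0 t xi < 0.
Proof.
  pose proof (weight_sum_pos t) as hS.
  pose proof (ymnum_eq t ltac:(lra)) as h.
  pose proof (exp_pos (q1 c1 c2 t0 t)). pose proof (ym_mean_between t).
  assert (hc : 0 < exp (c2 * (t - t0)) / L)
    by (apply Rdiv_lt_0_compat; [apply exp_pos | apply Lc_pos]).
  assert (0 < (weight_q2 + weight_q1 t) * ym_mean t) by (apply Rmult_lt_0_compat; lra).
  nra.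
Qed.

Lemma ym_between t : q1 c1 c2 t0 t <= ym c1 c2 t0 t xi <= q2 c1 c2 t0 t.
Proof.
  pose proof (weight_sum_pos t). pose proof (ym_mean_between t).
  pose proof (exp_pos (q1 c1 c2 t0 t)).
  rewrite ym_eq by lra.
  rewrite <- (ln_exp (q1 c1 c2 t0 t)), <- (ln_exp (q2 c1 c2 t0 t)).
  split; apply ln_le; lra.
Qed.

Lemma ym_at_0 : ym c1 c2 t0 0 xi = xi.
Proof.
  pose proof (exp_q1_lt_exp_q2 0 ltac:(lra)).
  pose proof (c1_sub_c2E_pos 0). pose proof Lc_pos.
  (* At t = 0 the two weights carry the same positive factor. *)
  assert (hP : P 0 * (L * exp (c2 * t0)) = L * (c1 - c2 * E 0)).
  { rewrite P_eq. replace (exp (c2 * (0 - t0))) with (/ exp (c2 * t0))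
      by (rewrite <- exp_Ropp; f_equal; ring).
    field. apply Rgt_not_eq, exp_pos. }
  pose proof (weight_sum_pos 0).
  rewrite ym_eq by lra. rewrite <- (ln_exp xi). f_equal.
  unfold ym_mean. rewrite weight_q2_eq, weight_q1_eq, hP.
  assert (0 < L * (c1 - c2 * E 0)) by nra.
  field. apply Rgt_not_eq. nra.
Qed.

Lemma ym_at_t0 : ym c1 c2 t0 t0 xi = 0.
Proof. pose proof (ym_between t0). rewrite q1_at_t0, q2_at_t0 in *. lra. Qed.

Lemma ym_arg_pos t :
  0 < exp (c2 * (t - t0)) / L * (ymnum c1 c2 t0 t xi / ymden c1 c2 t0 t xi).
Proof.
  pose proof (ymnum_neg t). pose proof (ymden_neg t).
  apply Rmult_lt_0_compat; [apply Rdiv_lt_0_compat; [apply exp_pos | apply Lc_pos]|].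
  replace (ymnum c1 c2 t0 t xi / ymden c1 c2 t0 t xi)
    with (- ymnum c1 c2 t0 t xi / - ymden c1 c2 t0 t xi) by (field; lra).
  apply Rdiv_lt_0_compat; lra.
Qed.

Lemma ym_continuity_pt t : continuity_pt (fun s => ym c1 c2 t0 s xi) t.
Proof.
  apply continuity_pt_filterlim.
  apply (@ex_derive_continuous R_AbsRing R_NormedModule (fun s => ym c1 c2 t0 s xi)).
  unfold ym, ymnum, ymden. auto_derive.
  split; [apply Rlt_not_eq, ymden_neg | split; [apply ym_arg_pos | exact I]].
Qed.

Lemma ym_derivative t : t < t0 ->
  derivable_pt_lim (fun s => ym c1 c2 t0 s xi) t (u c1 c2 t0 t (ym c1 c2 t0 t xi)).
Proof.
  intro ht. apply is_derive_Reals.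
  assert (hy : exp (ym c1 c2 t0 t xi)
               = exp (c2 * (t - t0)) / L * (ymnum c1 c2 t0 t xi / ymden c1 c2 t0 t xi))
    by (apply exp_ln, ym_arg_pos).
  assert (hE : E t < 1) by (rewrite <- exp_0; apply exp_increasing; pose proof Lc_pos; nra).
  pose proof (ymden_neg t) as hd. pose proof (ymnum_neg t) as hn.
  pose proof (c1_sub_c2E_pos t). pose proof (c1E_sub_c2_pos t). pose proof Lc_pos.
  rewrite (u_between _ _ (ym_between t)), hy, exp_q1, exp_q2.
  unfold ymden, ymnum in hd, hn. rewrite exp_c1_split in hd, hn.
  unfold ym, ymnum, ymden, p1, p2. auto_derive.
  - split; [apply Rlt_not_eq, ymden_neg | split; [apply ym_arg_pos | exact I]].
  - change (t + - t0) with (t - t0). rewrite !exp_c1_split.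
    set (e := E t) in *. set (e2 := exp (c2 * (t - t0))) in *.
    assert (0 < e2) by apply exp_pos. clearbody e e2.
    unfold Lc in *. field. repeat split; lra.
Qed.

End Characteristic.

Theorem mainTheorem4 (c1 c2 t0 : R) (hc1 : 0 < c1) (hc2 : c2 < 0) (ht0 : 0 < t0) :
  forall xi : R, q1 c1 c2 t0 0 <= xi <= q2 c1 c2 t0 0 ->
    (forall t : R, 0 <= t < t0 ->
       ymden c1 c2 t0 t xi < 0 /\ ymnum c1 c2 t0 t xi < 0) /\
    ym c1 c2 t0 0 xi = xi /\
    (forall t : R, 0 <= t < t0 ->
       q1 c1 c2 t0 t <= ym c1 c2 t0 t xi <= q2 c1 c2 t0 t) /\
    (forall t : R, 0 <= t < t0 ->
       derivable_pt_lim (fun s => ym c1 c2 t0 s xi) t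
         (u c1 c2 t0 t (ym c1 c2 t0 t xi))) /\
    limit1_in (fun t => ym c1 c2 t0 t xi) (fun t => t < t0) 0 t0.
Proof.
  intros xi hxi.
  split; [| split; [| split; [| split]]].
  - intros t _. split; [apply ymden_neg | apply ymnum_neg]; assumption.
  - apply ym_at_0; assumption.
  - intros t _. apply ym_between; assumption.
  - intros t [_ ht]. apply ym_derivative; assumption.
  - apply (limit1_in_continuity_pt (fun t => ym c1 c2 t0 t xi));
      [| apply ym_at_t0; assumption].
    apply ym_continuity_pt; assumption.
Qed.
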